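(* For every $n\ge 0$, the Wiener index of $S_n$ is \[ \d(S_n)=\frac{2n(2n+1)}{3}\binom{2n-1}{n}, \] and consequently $\d(S_n)\sim \frac{2}{3\sqrt{\pi}}\,4^n n^{3/2}$ as $n\to\infty$.
   Context: $S_n$ is the lattice (under inclusion) of order ideals of the shifted staircase poset $\{(i,j)\in\mathbb Z^2:1\le i\le j\le n\}$ with componentwise order; $|S_n|=2^n$. For a finite poset $Q$, $\d(Q)=\sum_{(p,q)\in Q\times Q}\d(p,q)$ where $\d(p,q)$ is the graph distance in the Hasse diagram of $Q$, summed over ordered pairs. Convention: $\binom{-1}{0}=1$. *)

From mathcomp Require Import all_boot.
From Stdlib Require Import Reals.
Set Implicit Arguments. Unset Strict Implicit. Unset Printing Implicit Defensive.

Section GraphDist.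
Variable V : finType.
Variable e : rel V.

Fixpoint ball (k : nat) (x : V) : {set V} :=
  if k is k'.+1 then ball k' x :|: [set y | [exists z in ball k' x, e z y]]
  else [set x].

(* graph distance: least k such that y is within k steps of x.  In a connected
   graph this is < #|V|, so the bounded search below is exact. *)
Definition gdist (x y : V) : nat := find (fun k => y \in ball k x) (iota 0 #|V|).
End GraphDist.

Section Hasse.
Variable V : finType.
Variable inQ : pred V.
Variable lt : rel V.

Definition covers (x y : V) : bool :=
  [&& inQ x, inQ y, lt x y & ~~ [exists z, [&& inQ z, lt x z & lt z y]]].

Definition hasse_edge (x y : V) : bool := covers x y || covers y x.

(* Wiener index: sum over ordered pairs of graph distances *)
Definition wiener : nat :=
  \sum_(p | inQ p) \sum_(q | inQ q) gdist hasse_edge p q.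
End Hasse.

(* Element (i,j) with 1 <= i <= j <= n is encoded 0-indexed as (i-1, j-1) : 'I_n * 'I_n *)
Definition cell (n : nat) := ('I_n * 'I_n)%type.

Definition in_stair (n : nat) (c : cell n) : bool := (c.1 <= c.2)%N.

Definition cell_le (n : nat) (c d : cell n) : bool := (c.1 <= d.1)%N && (c.2 <= d.2)%N.

Definition is_ideal (n : nat) (A : {set cell n}) : bool :=
  [forall c, (c \in A) ==> in_stair c] &&
  [forall c, forall d, [&& d \in A, in_stair c & cell_le c d] ==> (c \in A)].

Definition S_lt (n : nat) (A B : {set cell n}) : bool := A \proper B.

Definition wiener_S (n : nat) : nat := wiener (@is_ideal n) (@S_lt n).

(* In the lattice of order ideals, one can always move from A
   towards B by adding a minimal cell of A \ B or removing a maximal cell of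
   B \ A, so the Hasse distance is the size of the symmetric difference and
   d(S_n) = 2 T_n with T_n = sum_{A,B} |A \ B|.
   Deleting the diagonal of the staircase of size n+1 and shifting the
   remaining cells down gives an ideal of the staircase of size n; an ideal is
   recovered from this image A' and its number k of diagonal cells, which is
   k(A') or k(A')+1.  Hence T_{n+1} = 4 T_n + U_{n+1} and U_{n+1} = 4 U_n + R_n,
   where U_n = sum (k_A - k_B)_+ and R_n = #{k_A = k_B}; since C(n, k) ideals
   have k diagonal cells, R_n = C(2n, n) by Vandermonde, and solving gives
   6 T_n = n (2n+1) C(2n, n).  The asymptotics follow from the Wallis integrals
   int_0^{pi/2} sin^k, which squeeze pi n C(2n, n)^2 between 16^n n/(n+1/2)
   and 16^n. *)
From mathcomp Require Import all_boot zify.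
From Stdlib Require Import Reals Lra.
Set Implicit Arguments. Unset Strict Implicit. Unset Printing Implicit Defensive.
Local Open Scope nat_scope.

Lemma find_iota_threshold (p : pred nat) d N :
  d < N -> (forall k, p k = (d <= k)) -> find p (iota 0 N) = d.
Proof.
move=> ltdN pE; rewrite -(subnKC (ltnW ltdN)) iotaD find_cat size_iota.
have -> : has p (iota 0 d) = false by apply/hasP => -[x]; rewrite mem_iota pE; lia.
by case: (N - d) (subn_gt0 d N) => [|j]; rewrite ?ltdN //= pE leqnn addn0.
Qed.

Section SetFamilyDistance.
Variables (T : finType) (F : pred {set T}).
Implicit Types A B C : {set T}.

Definition sdist A B := #|A :\: B| + #|B :\: A|.

Lemma sdistC A B : sdist A B = sdist B A.
Proof. by rewrite /sdist addnC. Qed.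

Lemma sdist_triangle A B C : sdist A C <= sdist A B + sdist B C.
Proof.
have setD_trans (X Y Z : {set T}) : #|X :\: Z| <= #|X :\: Y| + #|Y :\: Z|.
  apply: leq_trans (leq_card_setU _ _); apply: subset_leq_card.
  by apply/subsetP => x; rewrite !inE; case: (x \in X) (x \in Y) (x \in Z) => [] [] [].
by rewrite /sdist; have := setD_trans A B C; have := setD_trans C B A; lia.
Qed.

Lemma sdistxx A : sdist A A = 0.
Proof. by rewrite /sdist setDv cards0. Qed.

Lemma sdist_eq0 A B : (sdist A B == 0) = (A == B).
Proof. by rewrite /sdist addn_eq0 !cards_eq0 !setD_eq0 eqEsubset andbC. Qed.

Lemma sdist_setU1 A m : m \notin A -> sdist A (m |: A) = 1.
Proof.
move=> mA; rewrite /sdist setDUl setDv setU0.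
have -> : A :\: (m |: A) = set0.
  by apply/setP => x; rewrite !inE; case: (x \in A); rewrite ?orbT ?andbF.
have /setDidPl -> : [disjoint [set m] & A] by rewrite disjoints1.
by rewrite cards0 cards1.
Qed.

Lemma sdist_lt_card A B : sdist A B < #|{set T}|.
Proof.
have -> : sdist A B = #|(A :\: B) :|: (B :\: A)|.
  rewrite -[RHS]addn0 -(cards0 T) -[in RHS](_ : (A :\: B) :&: (B :\: A) = set0).
    by rewrite cardsUI.
  by apply/setP => x; rewrite !inE; case: (x \in A) (x \in B) => [] [].
rewrite -cardsT -powersetT card_powerset cardsT.
exact: leq_ltn_trans (max_card _) (ltn_expl _ (ltnSn 1)).
Qed.

Lemma sdist_setD1 A B m : m \in B :\: A -> sdist A (B :\ m) = (sdist A B).-1.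
Proof.
case/setDP=> mB mA; rewrite /sdist.
have -> : A :\: (B :\ m) = A :\: B.
  apply/setP => x; rewrite !inE.
  by case: (eqVneq x m) => [->|xm]; rewrite ?eqxx ?(negbTE mA) ?andbF ?xm.
rewrite setDDl setUC -setDDl [#|B :\: A|](cardsD1 m) !inE mA mB; lia.
Qed.

Lemma sdist_setU1r A B m : m \in A :\: B -> sdist A (m |: B) = (sdist A B).-1.
Proof.
case/setDP=> mA mB; rewrite /sdist.
have -> : (m |: B) :\: A = B :\: A.
  apply/setP => x; rewrite !inE.
  by case: (eqVneq x m) => [->|xm]; rewrite ?eqxx ?mA ?(negbTE mB) ?xm.
rewrite setUC -setDDl [#|A :\: B|](cardsD1 m) !inE mA mB; lia.
Qed.

Hypothesis F_setD1 : forall A B, F A -> F B -> B :\: A != set0 ->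
  exists2 m, m \in B :\: A & F (B :\ m).
Hypothesis F_setU1 : forall A B, F A -> F B -> A :\: B != set0 ->
  exists2 m, m \in A :\: B & F (m |: B).

Local Notation cover := (covers F (fun A B => A \proper B)).
Local Notation edge := (hasse_edge F (fun A B => A \proper B)).

Lemma cover_setU1 A B : cover A B -> exists2 m, m \notin A & B = m |: A.
Proof.
case/and4P=> FA FB /properP[sAB [m0 m0B m0A]] /existsPn noMid.
have nzBA : B :\: A != set0 by apply/set0Pn; exists m0; rewrite inE m0A.
have [m /setDP[mB mA] FBm] := F_setD1 FA FB nzBA.
exists m => //; rewrite -[LHS](setD1K mB); congr (_ |: _).
apply/eqP; rewrite eq_sym eqEproper subsetD1 sAB mA /=; apply/negP => ltABm.
by have := noMid (B :\ m); rewrite FBm ltABm properD1.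
Qed.

Lemma setU1_cover A m : F A -> m \notin A -> F (m |: A) -> cover A (m |: A).
Proof.
move=> FA mA FmA; rewrite /covers FA FmA properEcard subsetUr cardsU1 mA ltnSn /=.
apply/existsPn => C; apply/negP => /and3P[_ /proper_card ltAC /proper_card].
by rewrite cardsU1 mA; lia.
Qed.

Lemma hasse_edge_sdist A B : edge A B -> [&& F A, F B & sdist A B == 1].
Proof.
case/orP=> cov; have /and4P[-> -> _ _] := cov; have [m mX ->] := cover_setU1 cov.
  by rewrite sdist_setU1.
by rewrite sdistC sdist_setU1.
Qed.

Lemma ball_sdist A B k : F A -> B \in ball edge k A -> F B && (sdist A B <= k).
Proof.
move=> FA; elim: k B => [|k IHk] B /=.
  by rewrite inE => /eqP ->; rewrite FA sdistxx.
rewrite !inE => /orP[/IHk/andP[-> ?]|/existsP[C /andP[/IHk/andP[_ leAC]]]]; first exact: ltnW.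
case/hasse_edge_sdist/and3P=> _ -> /eqP distCB.
by have := sdist_triangle A C B; lia.
Qed.

Lemma sdist_ball A B k : F A -> F B -> sdist A B <= k -> B \in ball edge k A.
Proof.
move=> FA; elim: k B => [|k IHk] B FB le_dist /=.
  by rewrite inE eq_sym -sdist_eq0; lia.
rewrite inE; case: (leqP (sdist A B) k) => [/IHk -> //|lt_dist].
apply/orP; right; rewrite inE; apply/existsP.
have [nzBA | /negPn/eqP eBA] := boolP (B :\: A != set0).
  have [m mBA FBm] := F_setD1 FA FB nzBA.
  exists (B :\ m); rewrite IHk ?sdist_setD1 //; last by lia.
  have /setDP[mB _] := mBA; rewrite -{2}(setD1K mB).
  by apply/orP; left; apply: setU1_cover; rewrite ?setD11 ?setD1K.
have [m mAB FmB] : exists2 m, m \in A :\: B & F (m |: B).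
  apply: F_setU1 => //; apply/negP => /eqP eAB.
  by move: lt_dist; rewrite /sdist eAB eBA cards0.
exists (m |: B); rewrite IHk ?sdist_setU1r //; last by lia.
by have /setDP[_ mB] := mAB; apply/orP; right; apply: setU1_cover.
Qed.

Lemma gdist_sdist A B : F A -> F B -> gdist edge A B = sdist A B.
Proof.
move=> FA FB; apply: find_iota_threshold; first exact: sdist_lt_card.
by move=> k; apply/idP/idP => [/(ball_sdist FA)/andP[]|]; last exact: sdist_ball.
Qed.

End SetFamilyDistance.

Lemma card_set_ord_range m l k : #|[set i : 'I_m | l <= i < k]| = minn k m - l.
Proof.
have -> : #|[set i : 'I_m | l <= i < k]| = \sum_(i < m) (l <= i < k).
  by rewrite -sum1_card big_mkcond; apply: eq_bigr => i _; rewrite inE; case: ifP.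
elim: m => [|m IHm]; first by rewrite big_ord0; lia.
by rewrite big_ord_recr /= IHm; case: (leqP l m) => ?; case: (ltnP m k) => ? /=; lia.
Qed.

Lemma card_set_ord_lt m k : #|[set i : 'I_m | i < k]| = minn k m.
Proof.
by rewrite -[RHS]subn0 -card_set_ord_range; apply: eq_card => i; rewrite !inE.
Qed.

Lemma downset_ordE m (D : {set 'I_m}) :
  (forall i j : 'I_m, i \in D -> j <= i -> j \in D) -> forall i, (i \in D) = (i < #|D|).
Proof.
move=> downD i; apply/idP/idP => [iD|].
  have : [set j : 'I_m | j < i.+1] \subset D.
    by apply/subsetP => j; rewrite inE => ji; apply: downD iD _.
  by move/subset_leq_card; rewrite card_set_ord_lt (minn_idPl (ltn_ord i)).
apply: contraLR => iD; have : D \subset [set j : 'I_m | j < i].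
  apply/subsetP => j jD; rewrite inE ltnNge; apply: contra iD => ij.
  exact: downD jD ij.
by move/subset_leq_card; rewrite card_set_ord_lt; lia.
Qed.

Section StaircaseIdeals.
Variable n : nat.
Implicit Types (A B : {set cell n}) (c d m : cell n).

Lemma is_idealP A : reflect ((forall c, c \in A -> in_stair c) /\
    (forall c d, d \in A -> in_stair c -> cell_le c d -> c \in A)) (is_ideal A).
Proof.
apply: (iffP andP) => [[/forallP inS /forallP closed]|[inS closed]]; split.
- by move=> c; apply/implyP.
- by move=> c d dA sc le_cd; apply: (implyP (forallP (closed c) d)); rewrite dA sc.
- by apply/forallP => c; apply/implyP/inS.
- apply/forallP => c; apply/forallP => d; apply/implyP => /and3P[dA sc le_cd].
  exact: closed le_cd.
Qed.

Lemma ideal_stair A : is_ideal A -> forall c, c \in A -> in_stair c.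
Proof. by case/is_idealP. Qed.

Definition cell_rank c := c.1 + c.2.

Lemma cell_rank_lt c d : cell_le c d -> c != d -> cell_rank c < cell_rank d.
Proof.
case: c d => [c1 c2] [d1 d2]; rewrite /cell_le /cell_rank xpair_eqE negb_and /=.
by rewrite -!val_eqE /= => /andP[]; lia.
Qed.

Lemma ideal_setD1_max A B m : is_ideal A -> is_ideal B -> m \in B :\: A ->
  (forall c, c \in B :\: A -> cell_rank c <= cell_rank m) -> is_ideal (B :\ m).
Proof.
move=> /is_idealP[_ closedA] /is_idealP[inSB closedB] /setDP[mB mA] m_max.
apply/is_idealP; split=> [c /setD1P[_ /inSB] //|c d /setD1P[dm dB] sc le_cd].
rewrite !inE (closedB c d) // andbT; apply: contra_neq dm => cm; subst c.
have dA : d \notin A by apply: contra mA => dA; apply: closedA le_cd.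
have := m_max d; rewrite inE dA dB => /(_ isT).
by have := cell_rank_lt le_cd; case: eqVneq => // _ /(_ isT); lia.
Qed.

Lemma ideal_setU1_min A B m : is_ideal A -> is_ideal B -> m \in A :\: B ->
  (forall c, c \in A :\: B -> cell_rank m <= cell_rank c) -> is_ideal (m |: B).
Proof.
move=> /is_idealP[inSA closedA] /is_idealP[inSB closedB] /setDP[mA mB] m_min.
apply/is_idealP; split=> [c /setU1P[-> |/inSB] //|c d]; first exact: inSA.
case/setU1P=> [->|dB] sc le_cd; last by rewrite inE (closedB c d) ?orbT.
rewrite !inE; case: (eqVneq c m) => //= cm; apply/negPn/negP => cB.
have := m_min c; rewrite inE cB (closedA c m) // => /(_ isT).
by have := cell_rank_lt le_cd cm; lia.
Qed.

Lemma ideal_setD1 A B : is_ideal A -> is_ideal B -> B :\: A != set0 ->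
  exists2 m, m \in B :\: A & is_ideal (B :\ m).
Proof.
move=> iA iB /set0Pn[m0 m0BA].
have [m mBA m_max] := arg_maxnP cell_rank m0BA.
by exists m => //; apply: ideal_setD1_max iA iB mBA m_max.
Qed.

Lemma ideal_setU1 A B : is_ideal A -> is_ideal B -> A :\: B != set0 ->
  exists2 m, m \in A :\: B & is_ideal (m |: B).
Proof.
move=> iA iB /set0Pn[m0 m0AB].
have [m mAB m_min] := arg_minnP cell_rank m0AB.
by exists m => //; apply: ideal_setU1_min iA iB mAB m_min.
Qed.

Lemma gdist_ideal A B : is_ideal A -> is_ideal B ->
  gdist (hasse_edge (@is_ideal n) (@S_lt n)) A B = sdist A B.
Proof. exact: (gdist_sdist ideal_setD1 ideal_setU1). Qed.

Definition diag_size A := #|[set i : 'I_n | (i, i) \in A]|.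

Lemma diag_size_le A : diag_size A <= n.
Proof. by apply: leq_trans (max_card _) _; rewrite card_ord. Qed.

Lemma ideal_diagE A i : is_ideal A -> ((i, i) \in A) = (i < diag_size A).
Proof.
case/is_idealP=> _ closedA.
rewrite -[RHS](downset_ordE (D := [set j : 'I_n | (j, j) \in A])) ?inE // => {}i j.
by rewrite !inE => iiA ji; apply: closedA iiA _ _; rewrite /in_stair /cell_le ?ji.
Qed.

Lemma ideal_fst_lt A c : is_ideal A -> c \in A -> c.1 < diag_size A.
Proof.
move=> iA cA; have /is_idealP[inS closedA] := iA; have sc := inS c cA.
rewrite -ideal_diagE //; apply: closedA cA _ _; first by rewrite /in_stair.
by rewrite /cell_le leqnn.
Qed.

Lemma ideal_mem_below_diag A c : is_ideal A -> in_stair c -> c.2 < diag_size A -> c \in A.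
Proof.
move=> iA sc; rewrite -ideal_diagE // => /(is_idealP _ iA).2; apply=> //.
by rewrite /cell_le leqnn andbT.
Qed.

End StaircaseIdeals.

Section DiagonalRemoval.
Variable n : nat.
Implicit Types (A B : {set cell n}) (e : cell n) (c d : cell n.+1).

Definition shift_cell e : cell n.+1 := (widen_ord (leqnSn n) e.1, lift ord0 e.2).

Lemma shift_cell1 e : (shift_cell e).1 = e.1 :> nat. Proof. by []. Qed.
Lemma shift_cell2 e : (shift_cell e).2 = e.2.+1 :> nat. Proof. exact: lift0. Qed.

Lemma shift_cell_inj : injective shift_cell.
Proof. by move=> [a b] [c d] /= [/val_inj-> /val_inj->]. Qed.

Variant cell_spec c : Prop :=
  | CellDiag of c.1 = c.2 :> nat
  | CellBelow of c.2 < c.1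
  | CellShift e of in_stair e & c = shift_cell e.

Lemma cellP c : cell_spec c.
Proof.
case: c => [a b]; case: (ltngtP a b) => [ab|ba|ab]; [|exact: CellBelow|exact: CellDiag].
have lt_a : a < n by have := ltn_ord b; lia.
have lt_b : b.-1 < n by have := ltn_ord b; lia.
apply: (@CellShift _ (Ordinal lt_a, Ordinal lt_b)); first by rewrite /in_stair /=; lia.
by congr pair; apply: val_inj; rewrite /= /bump; lia.
Qed.

Lemma diag_cellE c : c.1 = c.2 :> nat -> c = (c.1, c.1).
Proof. by case: c => a b /= /val_inj->. Qed.

Definition drop_diag (A : {set cell n.+1}) : {set cell n} :=
  [set e | in_stair e && (shift_cell e \in A)].

Definition add_diag A k : {set cell n.+1} :=
  shift_cell @: A :|: [set c : cell n.+1 | (c.1 == c.2 :> nat) && (c.1 < k)].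

Lemma shift_cell_stair e : in_stair e -> in_stair (shift_cell e).
Proof. by rewrite /in_stair shift_cell1 shift_cell2 => /leqW. Qed.

Lemma shift_cell_le e1 e2 : cell_le (shift_cell e1) (shift_cell e2) = cell_le e1 e2.
Proof. by rewrite /cell_le !shift_cell1 !shift_cell2. Qed.

Lemma mem_shift_cell_imset A c : (forall e, e \in A -> in_stair e) -> c.2 <= c.1 ->
  c \notin shift_cell @: A.
Proof.
move=> sA le_c; apply/imsetP => -[e eA ce].
by have := sA e eA; move: le_c; rewrite /in_stair ce shift_cell1 shift_cell2; lia.
Qed.

Section AddDiag.
Variables (A : {set cell n}) (k : nat).
Hypothesis sA : forall e, e \in A -> in_stair e.

Lemma mem_add_diag_shift e : in_stair e -> (shift_cell e \in add_diag A k) = (e \in A).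
Proof.
move=> se; rewrite !inE mem_imset ?shift_cell1 ?shift_cell2; last exact: shift_cell_inj.
by move: se; rewrite /in_stair; case: eqP; first lia; rewrite orbF.
Qed.

Lemma mem_add_diag_diag c : c.1 = c.2 :> nat -> (c \in add_diag A k) = (c.1 < k).
Proof.
move=> ec; rewrite inE (negbTE (mem_shift_cell_imset sA _)) ?ec //.
by rewrite inE ec eqxx.
Qed.

Lemma mem_add_diag_below c : c.2 < c.1 -> c \notin add_diag A k.
Proof.
move=> lt_c; rewrite inE (negbTE (mem_shift_cell_imset sA (ltnW lt_c))) inE.
by apply/andP => -[/eqP ec]; move: lt_c; rewrite ec ltnn.
Qed.

Lemma drop_add_diag : drop_diag (add_diag A k) = A.
Proof.
apply/setP => e; rewrite inE; case se: (in_stair e); first by rewrite mem_add_diag_shift.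
by apply/esym/negP => /sA; rewrite se.
Qed.

Lemma diag_size_add_diag : k <= n.+1 -> diag_size (add_diag A k) = k.
Proof.
move=> le_k; rewrite /diag_size -[RHS](minn_idPl le_k) -card_set_ord_lt.
by apply: eq_card => i; rewrite [LHS]in_set [RHS]in_set mem_add_diag_diag.
Qed.

End AddDiag.

Lemma drop_diag_ideal (A : {set cell n.+1}) : is_ideal A -> is_ideal (drop_diag A).
Proof.
case/is_idealP=> _ closedA; apply/is_idealP; split=> [e|e f]; rewrite !inE.
  by case/andP.
case/andP=> _ fA se le_ef; rewrite se (closedA _ _ fA) ?shift_cell_le //.
exact: shift_cell_stair.
Qed.

Lemma add_diag_drop_diag (A : {set cell n.+1}) : is_ideal A ->
  add_diag (drop_diag A) (diag_size A) = A.
Proof.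
move=> iA; have sD e : e \in drop_diag A -> in_stair e by rewrite inE => /andP[].
apply/setP => c; case: (cellP c) => [ec|lt_c|e se ->].
- by rewrite mem_add_diag_diag // {2}(diag_cellE ec) ideal_diagE.
- rewrite (negbTE (mem_add_diag_below _ _ lt_c)) //.
  by apply/esym/negP => /(ideal_stair iA); rewrite /in_stair; lia.
- by rewrite mem_add_diag_shift // inE se.
Qed.

Lemma diag_size_drop_diag (A : {set cell n.+1}) : is_ideal A ->
  diag_size (drop_diag A) <= diag_size A <= (diag_size (drop_diag A)).+1.
Proof.
move=> iA; have iD := drop_diag_ideal iA.
have le_d := diag_size_le (drop_diag A); have le_dA := diag_size_le A.
apply/andP; split.
  case: (posnP (diag_size (drop_diag A))) => [-> //|d_gt0].
  have lt_i : (diag_size (drop_diag A)).-1 < n by lia.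
  have : (Ordinal lt_i, Ordinal lt_i) \in drop_diag A by rewrite ideal_diagE //=; lia.
  by rewrite inE => /andP[_ /(ideal_fst_lt iA)]; rewrite shift_cell1 /=; lia.
case: (leqP (diag_size A) 1) => [|gt1]; first lia.
have lt_j : (diag_size A).-2 < n by lia.
have : (Ordinal lt_j, Ordinal lt_j) \in drop_diag A.
  rewrite inE /in_stair leqnn ideal_mem_below_diag ?shift_cell2 //=; last lia.
  by apply: shift_cell_stair; rewrite /in_stair.
by rewrite ideal_diagE //=; lia.
Qed.

Lemma add_diag_ideal A k : is_ideal A -> diag_size A <= k <= (diag_size A).+1 ->
  is_ideal (add_diag A k).
Proof.
move=> iA /andP[ge_k le_k]; have sA := ideal_stair iA.
have /is_idealP[_ closedA] := iA.
apply/is_idealP; split=> [c|c d].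
  case: (cellP c) => [ec|lt_c|e se ->] cA.
  - by rewrite /in_stair ec.
  - by rewrite (negbTE (mem_add_diag_below _ _ lt_c)) in cA.
  - exact: shift_cell_stair.
move=> dA sc; case: (cellP c) sc => [ec|lt_c|e se ->] sc le_cd; last first.
- rewrite mem_add_diag_shift //; case: (cellP d) dA le_cd => [ed|lt_d|f sf ->].
  + rewrite mem_add_diag_diag // /cell_le shift_cell1 shift_cell2 => lt_dk le_ed.
    by apply: ideal_mem_below_diag; lia.
  + by rewrite (negbTE (mem_add_diag_below _ _ lt_d)).
  + by rewrite mem_add_diag_shift // shift_cell_le => fA; apply: closedA.
- by move: sc; rewrite /in_stair; lia.
rewrite mem_add_diag_diag //; case: (cellP d) dA le_cd => [ed|lt_d|f sf ->].
- by rewrite mem_add_diag_diag // /cell_le; lia.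
- by rewrite (negbTE (mem_add_diag_below _ _ lt_d)).
- rewrite mem_add_diag_shift // /cell_le shift_cell1 => /(ideal_fst_lt iA).
  lia.
Qed.

Lemma card_setD_add_diag A B k l :
    (forall e, e \in A -> in_stair e) -> (forall e, e \in B -> in_stair e) -> k <= n.+1 ->
  #|add_diag A k :\: add_diag B l| = #|A :\: B| + (k - l).
Proof.
move=> sA sB le_k; have sAB e : e \in A :\: B -> in_stair e by case/setDP=> /sA.
set D := [set c : cell n.+1 | (c.1 == c.2 :> nat) && (l <= c.1 < k)].
have -> : add_diag A k :\: add_diag B l = shift_cell @: (A :\: B) :|: D.
  apply/setP => c; rewrite in_setU in_setD [c \in D]inE.
  case: (cellP c) => [ec|lt_c|e se ->].
  - rewrite !mem_add_diag_diag // (negbTE (mem_shift_cell_imset sAB _)) ?ec //.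
    by rewrite eqxx /= -leqNgt.
  - rewrite (negbTE (mem_add_diag_below k sA lt_c)) andbF.
    rewrite (negbTE (mem_shift_cell_imset sAB (ltnW lt_c))).
    by case: eqP lt_c => // ->; rewrite ltnn.
  - rewrite !mem_add_diag_shift // mem_imset ?inE ?shift_cell1 ?shift_cell2; last first.
      exact: shift_cell_inj.
    by move: se; rewrite /in_stair; case: eqP; first lia; rewrite orbF.
have -> : D = [set (i, i) | i in [set i : 'I_n.+1 | l <= i < k]].
  apply/setP => c; rewrite inE; apply/idP/imsetP => [/andP[/eqP ec lc]|[i]].
    by exists c.1; rewrite ?inE // {1}(diag_cellE ec).
  by rewrite inE => li ->; rewrite /= eqxx.
rewrite cardsU card_imset; last exact: shift_cell_inj.
rewrite card_imset ?card_set_ord_range; last by move=> i j [].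
have -> : shift_cell @: (A :\: B) :&: [set (i, i) | i in [set i : 'I_n.+1 | l <= i < k]] = set0.
  apply/setP => c; rewrite !inE; apply/andP => -[/imsetP[e /sAB se ->] /imsetP[i _ []]].
  by move: se; rewrite /in_stair => + /(congr1 val) + /(congr1 val); rewrite /= /bump; lia.
by rewrite cards0 subn0 (minn_idPl le_k).
Qed.

End DiagonalRemoval.

Definition ideal_sum n (f : {set cell n} -> {set cell n} -> nat) : nat :=
  \sum_(A | is_ideal A) \sum_(B | is_ideal B) f A B.

Section IdealSums.
Variable n : nat.

Lemma drop_diag_fiber (A' : {set cell n}) : is_ideal A' -> forall A : {set cell n.+1},
  (is_ideal A && (drop_diag A == A')) =
  (A == add_diag A' (diag_size A')) || (A == add_diag A' (diag_size A').+1).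
Proof.
move=> iA' A; have sA' := ideal_stair iA'; have le_d := diag_size_le A'.
apply/idP/idP => [/andP[iA /eqP dropA]|].
  have := diag_size_drop_diag iA; rewrite dropA => range.
  rewrite -(add_diag_drop_diag iA) dropA.
  have [->|->] : diag_size A = diag_size A' \/ diag_size A = (diag_size A').+1 by lia.
    by rewrite eqxx.
  by rewrite eqxx orbT.
by case/orP=> /eqP->; rewrite add_diag_ideal ?drop_add_diag ?eqxx //; lia.
Qed.

Lemma sum_ideals_succ (F : {set cell n} -> nat -> nat) :
  \sum_(A : {set cell n.+1} | is_ideal A) F (drop_diag A) (diag_size A) =
  \sum_(A : {set cell n} | is_ideal A) (F A (diag_size A) + F A (diag_size A).+1).
Proof.
rewrite (partition_big (@drop_diag n) (@is_ideal n)) => [|A]; last exact: drop_diag_ideal.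
apply: eq_bigr => A' iA'; rewrite (eq_bigl _ _ (drop_diag_fiber iA')).
have sA' := ideal_stair iA'; have le_d := diag_size_le A'.
have ne : add_diag A' (diag_size A') != add_diag A' (diag_size A').+1.
  by apply: contraTneq isT => /(congr1 (@diag_size _)); rewrite !diag_size_add_diag //; lia.
rewrite (bigD1 (add_diag A' (diag_size A'))) /=; last by rewrite eqxx.
rewrite (big_pred1 (add_diag A' (diag_size A').+1)) => [|A /=]; last first.
  by case: eqP => [->|_]; rewrite ?(negbTE ne) ?andbT.
by rewrite !drop_add_diag // !diag_size_add_diag //; lia.
Qed.

Lemma ideal_sum_succ (F : {set cell n} -> nat -> {set cell n} -> nat -> nat) :
  ideal_sum (fun A B : {set cell n.+1} =>
    F (drop_diag A) (diag_size A) (drop_diag B) (diag_size B)) =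
  ideal_sum (fun A B => let a := diag_size A in let b := diag_size B in
    F A a B b + F A a B b.+1 + F A a.+1 B b + F A a.+1 B b.+1).
Proof.
rewrite /ideal_sum; under eq_bigr => A _ do rewrite (sum_ideals_succ (F _ _)).
rewrite (sum_ideals_succ (fun A a => \sum_(B | is_ideal B)
  (F A a B (diag_size B) + F A a B (diag_size B).+1))).
by apply: eq_bigr => A _; rewrite -big_split; apply: eq_bigr => B _ /=; lia.
Qed.

Lemma card_setD_drop_diag (A B : {set cell n.+1}) : is_ideal A -> is_ideal B ->
  #|A :\: B| = #|drop_diag A :\: drop_diag B| + (diag_size A - diag_size B).
Proof.
move=> iA iB; rewrite -{1}(add_diag_drop_diag iA) -{1}(add_diag_drop_diag iB).
by rewrite card_setD_add_diag ?diag_size_le //; apply/ideal_stair/drop_diag_ideal.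
Qed.

End IdealSums.

Lemma cell0_set0 (A : {set cell 0}) : A = set0.
Proof. by apply/setP => -[[]]. Qed.

Lemma ideal0 m : is_ideal (set0 : {set cell m}).
Proof. by apply/is_idealP; split=> [c|c d]; rewrite inE. Qed.

Lemma sum_ideals_diag_size n (F : nat -> nat) :
  \sum_(A : {set cell n} | is_ideal A) F (diag_size A) = \sum_(s < n.+1) 'C(n, s) * F s.
Proof.
elim: n F => [|m IHm] F.
  rewrite (big_pred1 set0) => [|A]; last by rewrite (cell0_set0 A) ideal0; apply/esym/eqP.
  by rewrite big_ord1 mul1n; have := diag_size_le (set0 : {set cell 0}); case: diag_size.
rewrite (sum_ideals_succ (fun _ k => F k)) (IHm (fun s => F s + F s.+1)).
rewrite [RHS]big_ord_recl bin0 mul1n; under [in RHS]eq_bigr do rewrite binS mulnDl.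
under [in LHS]eq_bigr do rewrite mulnDr.
rewrite !big_split /= addnA; congr (_ + _).
rewrite [in LHS]big_ord_recl [in RHS]big_ord_recr /= bin0 mul1n bin_small // addn0.
by congr (_ + _); apply: eq_bigr => i _; rewrite /bump.
Qed.

Definition sum_setD n := ideal_sum (fun A B : {set cell n} => #|A :\: B|).
Definition sum_diag_gap n :=
  ideal_sum (fun A B : {set cell n} => diag_size A - diag_size B).
Definition sum_diag_eq n :=
  ideal_sum (fun A B : {set cell n} => (diag_size A == diag_size B : nat)).

Lemma subn_succ4 a b :
  (a - b) + (a - b.+1) + (a.+1 - b) + (a.+1 - b.+1) = 4 * (a - b) + (a == b).
Proof. by case: (eqVneq a b) => [->|]; lia. Qed.

Lemma sum_diag_gapS n : sum_diag_gap n.+1 = 4 * sum_diag_gap n + sum_diag_eq n.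
Proof.
rewrite /sum_diag_gap (ideal_sum_succ (fun _ a _ b => a - b)) /sum_diag_eq /ideal_sum.
rewrite big_distrr -big_split; apply: eq_bigr => A _.
by rewrite big_distrr -big_split; apply: eq_bigr => B _; rewrite /= subn_succ4.
Qed.

Lemma sum_setDS n : sum_setD n.+1 = 4 * sum_setD n + sum_diag_gap n.+1.
Proof.
rewrite sum_diag_gapS /sum_setD; transitivity (ideal_sum (fun A B : {set cell n.+1} =>
    #|drop_diag A :\: drop_diag B| + (diag_size A - diag_size B))).
  by apply: eq_bigr => A iA; apply: eq_bigr => B iB; rewrite card_setD_drop_diag.
rewrite (ideal_sum_succ (fun A a B b => #|A :\: B| + (a - b))) /sum_diag_gap /sum_diag_eq.
rewrite /ideal_sum !big_distrr -!big_split; apply: eq_bigr => A _.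
rewrite !big_distrr -!big_split; apply: eq_bigr => B _ /=.
by have := subn_succ4 (diag_size A) (diag_size B); lia.
Qed.

Lemma sum_diag_eq_central n : sum_diag_eq n = 'C(2 * n, n).
Proof.
have pick (s : 'I_n.+1) : \sum_(t < n.+1) 'C(n, t) * (s == t :> nat) = 'C(n, s).
  rewrite (bigD1 s) //= eqxx muln1 big1 ?addn0 // => t ts.
  by rewrite val_eqE eq_sym (negbTE ts) muln0.
rewrite /sum_diag_eq /ideal_sum.
under eq_bigr => A _ do rewrite (sum_ideals_diag_size n (fun t => diag_size A == t : nat)).
rewrite (sum_ideals_diag_size n (fun s => \sum_(t < n.+1) 'C(n, t) * (s == t))).
under eq_bigr => s _ do rewrite pick.
rewrite mul2n -addnn -(Vandermonde n n n); apply: eq_bigr => i _.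
by rewrite bin_sub // -ltnS.
Qed.

Lemma sum_diag_gap0 : sum_diag_gap 0 = 0.
Proof. by apply: big1 => A _; apply: big1 => B _; have := diag_size_le A; lia. Qed.

Lemma sum_setD0 : sum_setD 0 = 0.
Proof. by apply: big1 => A _; apply: big1 => B _; rewrite (cell0_set0 A) set0D cards0. Qed.

Lemma mul_central_binS n : n.+1 * 'C(2 * n.+1, n.+1) = 2 * (2 * n).+1 * 'C(2 * n, n).
Proof.
have -> : 2 * n.+1 = (2 * n).+2 by lia.
have := mul_bin_diag (2 * n).+2 n; have := mul_bin_diag (2 * n).+1 n.
have -> : 'C((2 * n).+1, n.+1) = 'C((2 * n).+1, n).
  by rewrite -[in LHS](_ : (2 * n).+1 - n = n.+1) ?bin_sub //; lia.
by rewrite /=; nia.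
Qed.

Lemma sum_diag_gap_closed n : 2 * sum_diag_gap n = n * 'C(2 * n, n).
Proof.
elim: n => [|n IHn]; first by rewrite sum_diag_gap0.
rewrite sum_diag_gapS sum_diag_eq_central mulnDr mulnCA IHn.
by have := mul_central_binS n; nia.
Qed.

Lemma sum_setD_closed n : 6 * sum_setD n = n * (2 * n + 1) * 'C(2 * n, n).
Proof.
elim: n => [|n IHn]; first by rewrite sum_setD0.
rewrite sum_setDS; have := sum_diag_gap_closed n.+1; have := mul_central_binS n.
by nia.
Qed.

Lemma wiener_S_sum_setD n : wiener_S n = 2 * sum_setD n.
Proof.
transitivity (ideal_sum (fun A B : {set cell n} => sdist A B)).
  by apply: eq_bigr => A iA; apply: eq_bigr => B iB; rewrite gdist_ideal.
rewrite /ideal_sum /sdist mul2n -addnn.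
under eq_bigr => A _ do rewrite big_split.
by rewrite big_split /=; congr addn; apply: exchange_big.
Qed.

Lemma wiener_S_closed n : 3 * wiener_S n = n * (2 * n + 1) * 'C(2 * n, n).
Proof. by rewrite wiener_S_sum_setD; have := sum_setD_closed n; lia. Qed.

Lemma bin_double_pred n : 0 < n -> 'C(2 * n, n) = 2 * 'C(2 * n - 1, n).
Proof.
case: n => // n _; have -> : 2 * n.+1 = (2 * n).+2 by lia.
have -> : (2 * n).+2 - 1 = (2 * n).+1 by lia.
rewrite binS -[in X in _ + X](bin_sub (_ : n <= (2 * n).+1)); last lia.
have -> : (2 * n).+1 - n = n.+1 by lia.
lia.
Qed.

(* Imported only here: Coquelicot's [ball] and [iota] shadow the ones used above. *)
From Coquelicot Require Import Coquelicot.
Local Open Scope nat_scope.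

Section Asymptotics.
Local Open Scope R_scope.

Lemma INR_muln m k : INR (m * k) = INR m * INR k.
Proof. by rewrite -multE mult_INR. Qed.

Lemma INR_double n : INR (2 * n) = 2 * INR n.
Proof. by rewrite INR_muln. Qed.

Lemma Rpower_3_2 x : 0 < x -> Rpower x (3 / 2) = x * sqrt x.
Proof.
move=> x_gt0; rewrite (_ : 3 / 2 = 1 + / 2); last by field.
by rewrite Rpower_plus Rpower_1 // Rpower_sqrt.
Qed.

Lemma is_lim_seq_inv_succ : is_lim_seq (fun n => / INR n.+1) 0.
Proof.
apply/(is_lim_seq_incr_1 (fun n => / INR n)).
exact: (is_lim_seq_inv _ _ is_lim_seq_INR).
Qed.

Definition wallis (k : nat) : R := RInt (fun x => sin x ^ k) 0 (PI / 2).

Lemma continuous_sin_pow k x : continuous (fun x => sin x ^ k) x.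
Proof. by apply: ex_derive_continuous; auto_derive. Qed.

Lemma ex_RInt_sin_pow k : ex_RInt (fun x => sin x ^ k) 0 (PI / 2).
Proof. by apply: ex_RInt_continuous => x _; apply: continuous_sin_pow. Qed.

Lemma wallis0 : wallis 0 = PI / 2.
Proof. by rewrite /wallis RInt_const /scal /= /mult /=; lra. Qed.

Lemma wallis1 : wallis 1 = 1.
Proof.
have prim : is_RInt (fun x => sin x ^ 1) 0 (PI / 2) (minus (- cos (PI / 2)) (- cos 0)).
  apply: (is_RInt_derive (fun x => - cos x)) => x _; last exact: continuous_sin_pow.
  by auto_derive; last ring.
by rewrite /wallis (is_RInt_unique _ _ _ _ prim) /minus /plus /opp /= cos_PI2 cos_0; ring.
Qed.

(* Integration by parts, with [-cos x * sin x ^ k.+1] as primitive of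
   [k.+2 * sin x ^ k.+2 - k.+1 * sin x ^ k]. *)
Lemma wallisSS k : wallis k.+2 = INR k.+1 / INR k.+2 * wallis k.
Proof.
set a := INR k.+1; set b := INR k.+2.
have b_neq0 : b <> 0 by apply: not_0_INR.
have parts : is_RInt (fun x => b * sin x ^ k.+2 - a * sin x ^ k) 0 (PI / 2)
    (minus (- cos (PI / 2) * sin (PI / 2) ^ k.+1) (- cos 0 * sin 0 ^ k.+1)).
  apply: (is_RInt_derive (fun x => - cos x * sin x ^ k.+1)) => x _; last first.
    by apply: ex_derive_continuous; auto_derive.
  auto_derive => //; change (match k with 0%nat => 1 | _.+1 => INR k + 1 end) with a.
  rewrite /b S_INR -/a /=.
  have c2 : cos x * cos x = 1 - sin x * sin x by have := sin2_cos2 x; rewrite /Rsqr; lra.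
  transitivity (sin x * sin x * sin x ^ k - cos x * cos x * a * sin x ^ k); first ring.
  by rewrite c2; ring.
have := is_RInt_plus _ _ _ _ _ _ parts
  (is_RInt_scal _ _ _ a _ (RInt_correct _ _ _ (ex_RInt_sin_pow k))).
move=> /(is_RInt_scal _ _ _ (/ b)) /is_RInt_unique.
rewrite /wallis (RInt_ext _ (fun x => sin x ^ k.+2)) => [->|x _].
  by rewrite /scal /plus /minus /opp /= /mult /plus /= cos_PI2 sin_0; field.
by rewrite /scal /plus /= /mult /=; field.
Qed.

Lemma wallis_decr k : wallis k.+1 <= wallis k.
Proof.
apply: RInt_le; [have := PI_RGT_0; lra | exact: ex_RInt_sin_pow | exact: ex_RInt_sin_pow |].
move=> x [x_gt0 x_lt]; have s_ge0 : 0 <= sin x by apply: sin_ge_0; lra.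
have s_le1 : sin x <= 1 by have := SIN_bound x; lra.
by have := pow_le _ k s_ge0; rewrite /=; nra.
Qed.

Local Notation cbin n := (INR 'C(2 * n, n)).

Lemma cbin_gt0 n : 0 < cbin n.
Proof. by apply: lt_0_INR; apply/ltP; rewrite bin_gt0; lia. Qed.

Lemma cbinS n : INR n.+1 * cbin n.+1 = 2 * INR (2 * n).+1 * cbin n.
Proof. by rewrite (_ : 2 = INR 2) // -!mult_INR !multE mul_central_binS. Qed.

Lemma wallis_even n : wallis (2 * n) * 4 ^ n = PI / 2 * cbin n.
Proof.
elim: n => [|n IHn]; first by rewrite /= wallis0; lra.
have n1_gt0 : 0 < INR n.+1 by apply: lt_0_INR; lia.
have -> : cbin n.+1 = 2 * INR (2 * n).+1 / INR n.+1 * cbin n.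
  by apply: (Rmult_eq_reg_l (INR n.+1)); [rewrite cbinS; field|]; lra.
rewrite (_ : (2 * n.+1)%nat = (2 * n).+2) ?wallisSS -?tech_pow_Rmult; last lia.
have -> : INR (2 * n).+2 = 2 * INR n.+1 by rewrite -INR_double; congr INR; lia.
transitivity (2 * INR (2 * n).+1 / INR n.+1 * (wallis (2 * n) * 4 ^ n)); first by field; lra.
by rewrite IHn; field; lra.
Qed.

Lemma wallis_odd n : wallis (2 * n).+1 * INR (2 * n).+1 * cbin n = 4 ^ n.
Proof.
elim: n => [|n IHn]; first by rewrite /= wallis1; lra.
have n1_gt0 : 0 < INR n.+1 by apply: lt_0_INR; lia.
have odd_gt0 : 0 < INR (2 * n).+3 by apply: lt_0_INR; lia.
have -> : cbin n.+1 = 2 * INR (2 * n).+1 / INR n.+1 * cbin n.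
  by apply: (Rmult_eq_reg_l (INR n.+1)); [rewrite cbinS; field|]; lra.
rewrite (_ : (2 * n.+1)%nat = (2 * n).+2) ?wallisSS -?tech_pow_Rmult; last lia.
have -> : INR (2 * n).+2 = 2 * INR n.+1 by rewrite -INR_double; congr INR; lia.
rewrite -IHn; field; lra.
Qed.

Lemma central_bin_lower n : 2 * (4 ^ n) ^ 2 <= PI * INR (2 * n).+1 * cbin n ^ 2.
Proof.
have M_gt0 : 0 < INR (2 * n).+1 * cbin n * 4 ^ n.
  apply: Rmult_lt_0_compat; last by apply: pow_lt; lra.
  by apply: Rmult_lt_0_compat; [apply: lt_0_INR; lia | apply: cbin_gt0].
have := Rmult_le_compat_r _ _ _ (Rlt_le _ _ M_gt0) (wallis_decr (2 * n)).
have -> : wallis (2 * n).+1 * (INR (2 * n).+1 * cbin n * 4 ^ n) = (4 ^ n) ^ 2.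
  transitivity (wallis (2 * n).+1 * INR (2 * n).+1 * cbin n * 4 ^ n); first ring.
  by rewrite wallis_odd; ring.
have -> : wallis (2 * n) * (INR (2 * n).+1 * cbin n * 4 ^ n) =
    (wallis (2 * n) * 4 ^ n) * INR (2 * n).+1 * cbin n by ring.
by rewrite wallis_even; lra.
Qed.

Lemma central_bin_upper n : PI * INR n * cbin n ^ 2 <= (4 ^ n) ^ 2.
Proof.
case: n => [|m]; first by rewrite /= Rmult_0_r Rmult_0_l; lra.
have M_gt0 : 0 < 2 * INR m.+1 * cbin m.+1 * 4 ^ m.+1.
  apply: Rmult_lt_0_compat; last by apply: pow_lt; lra.
  apply: Rmult_lt_0_compat; last exact: cbin_gt0.
  by apply: Rmult_lt_0_compat; [lra | apply: lt_0_INR; lia].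
have := Rmult_le_compat_r _ _ _ (Rlt_le _ _ M_gt0) (wallis_decr (2 * m).+1).
rewrite (_ : (2 * m).+2 = (2 * m.+1)%nat); last lia.
have -> : wallis (2 * m.+1) * (2 * INR m.+1 * cbin m.+1 * 4 ^ m.+1) =
    (wallis (2 * m.+1) * 4 ^ m.+1) * 2 * INR m.+1 * cbin m.+1 by ring.
have -> : wallis (2 * m).+1 * (2 * INR m.+1 * cbin m.+1 * 4 ^ m.+1) =
    4 * (wallis (2 * m).+1 * INR (2 * m).+1 * cbin m) * 4 ^ m.+1.
  transitivity (wallis (2 * m).+1 * 2 * (INR m.+1 * cbin m.+1) * 4 ^ m.+1); first ring.
  by rewrite cbinS; ring.
by rewrite wallis_even wallis_odd /=; lra.
Qed.

Lemma wiener_S_real n : INR (wiener_S n) = INR n * (2 * INR n + 1) * cbin n / 3.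
Proof.
have := congr1 INR (wiener_S_closed n); rewrite !INR_muln -plusE plus_INR INR_double INR_1.
rewrite (_ : INR 3 = 3) => [<-|]; first by field.
by rewrite /=; ring.
Qed.

(* With [y := cbin n * sqrt (PI * n)], the ratio is [(2n + 1) y / (2 n 4^n)] and
   the Wallis bounds read [2n 16^n <= (2n + 1) y^2] and [y <= 4^n]. *)
Lemma wiener_S_ratio_bounds n : (0 < n)%nat ->
  1 <= INR (wiener_S n) / (2 / (3 * sqrt PI) * 4 ^ n * Rpower (INR n) (3 / 2))
    <= 1 + / INR n.
Proof.
move=> n_gt0; have := central_bin_lower n; have := central_bin_upper n.
have N_ge1 : 1 <= INR n by apply: (le_INR 1); apply/leP.
rewrite wiener_S_real Rpower_3_2 ?S_INR ?INR_double; last lra.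
set N := INR n in N_ge1 *; set P := 4 ^ n; set c := cbin n => upper lower.
have P_gt0 : 0 < P by apply: pow_lt; lra.
have c_gt0 : 0 < c by apply: cbin_gt0.
have sqrtN_gt0 : 0 < sqrt N by apply: sqrt_lt_R0; lra.
have sqrtPI_gt0 : 0 < sqrt PI by apply: sqrt_lt_R0; have := PI_RGT_0; lra.
have sqrtN2 := sqrt_sqrt N ltac:(lra).
have sqrtPI2 := sqrt_sqrt PI ltac:(have := PI_RGT_0; lra).
set q := sqrt PI in sqrtPI_gt0 sqrtPI2 *; set s := sqrt N in sqrtN_gt0 sqrtN2 *.
set y := c * q * s.
have y_gt0 : 0 < y by rewrite /y; apply: Rmult_lt_0_compat => //; apply: Rmult_lt_0_compat.
have y2 : y * y = PI * N * c ^ 2 by rewrite /y -sqrtPI2 -sqrtN2; ring.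
have y_le : y <= P.
  have yy : y * y <= P * P by rewrite y2; rewrite /= Rmult_1_r in upper; lra.
  by clear -yy y_gt0 P_gt0; nra.
have y_ge : 2 * N * P <= (2 * N + 1) * y.
  have yy : 2 * N * (P * P) <= (2 * N + 1) * (y * y).
    by rewrite y2; have := Rmult_le_compat_l N _ _ ltac:(lra) lower; rewrite /=; lra.
  by clear -yy y_le y_gt0 P_gt0 N_ge1; nra.
have -> : N * (2 * N + 1) * c / 3 / (2 / (3 * q) * P * (N * s)) =
    (2 * N + 1) * y / (2 * P * N).
  by rewrite /y -sqrtN2; field; repeat split; nra.
have PN_gt0 : 0 < 2 * P * N by nra.
split; first by apply/Rle_div_r => //; lra.
apply/Rle_div_l => //; have := Rmult_le_compat_l (2 * N + 1) _ _ ltac:(lra) y_le.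
have -> : (1 + / N) * (2 * P * N) = 2 * P * (N + 1) by field; lra.
lra.
Qed.

End Asymptotics.

Lemma wiener_S_closed_pred n : 3 * wiener_S n = 2 * n * (2 * n + 1) * 'C(2 * n - 1, n).
Proof.
rewrite wiener_S_closed; case: (posnP n) => [->|n_gt0]; first by rewrite !muln0.
by rewrite bin_double_pred //; lia.
Qed.

Theorem corollary1p6 :
  (forall n : nat,
      INR (wiener_S n) =
      (INR (2 * n * (2 * n + 1)) / 3 * INR 'C(2 * n - 1, n))%R)
  /\
  Un_cv (fun n : nat =>
           (INR (wiener_S n) /
            (2 / (3 * sqrt PI) * 4 ^ n * Rpower (INR n) (3 / 2)))%R) 1%R.
Proof.
split=> [n|].
  have := congr1 INR (wiener_S_closed_pred n).
  rewrite !INR_muln (_ : INR 3 = 3%R) => [W3|]; last by rewrite /=; ring.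
  by apply: (Rmult_eq_reg_l 3); [rewrite W3; field | lra].
apply/is_lim_seq_Reals/is_lim_seq_incr_1.
apply: (is_lim_seq_le_le (fun _ => 1%R) _ (fun n => 1 + / INR n.+1)%R) => [n||].
- exact: wiener_S_ratio_bounds.
- exact: is_lim_seq_const.
- have := is_lim_seq_plus' _ _ 1 0 (is_lim_seq_const 1) is_lim_seq_inv_succ.
  by rewrite Rplus_0_r.
Qed.
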